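(* For $e\in\{0,1\}$ let $d_e,d'_e$ be metrics on $\omega$ and let $g_e:\langle\omega,d_e\rangle\to\langle\omega,d'_e\rangle$ be Cauchy-continuous. The following are equivalent: (1) there is a continuous function $f:\langle X,d_X\rangle\to\langle Y,d_Y\rangle$ between Polish metric spaces which is coded by both $(g_0,d_0,d'_0)$ and $(g_1,d_1,d'_1)$; (2) $(g_0,d_0,d'_0)\approx_{\mathrm{cdi}}(g_1,d_1,d'_1)$.
   Context: A dense isometry is a distance-preserving map (not necessarily onto) with dense image. A function between metric spaces is Cauchy-continuous if it maps Cauchy sequences to Cauchy sequences. Let $\mathcal{C}(\omega)$ be the set of triples $(g,d,d')$ where $d,d'$ are metrics on $\omega$ and $g:\langle\omega,d\rangle\to\langle\omega,d'\rangle$ is Cauchy-continuous. For a continuous $f:\langle X,d_X\rangle\to\langle Y,d_Y\rangle$ between infinite Polish metric spaces and $(g,d,d')\in\mathcal{C}(\omega)$, $(g,d,d')$ codes $f$ if there are dense isometries $\iota:\langle\omega,d\rangle\to\langle X,d_X\rangle$ and $\iota':\langle\omega,d'\rangle\to\langle Y,d_Y\rangle$ with $\iota'\circ g=f\circ\iota$. On $\mathcal{C}(\omega)$: $(g_0,d_0,d'_0)\preceq_{\mathrm{cdi}}(g_1,d_1,d'_1)$ iff there are dense isometries $\iota:\langle\omega,d_0\rangle\to\langle\omega,d_1\rangle$ and $\iota':\langle\omega,d'_0\rangle\to\langle\omega,d'_1\rangle$ with $\iota'\circ g_0=g_1\circ\iota$; and $(g_0,d_0,d'_0)\approx_{\mathrm{cdi}}(g_1,d_1,d'_1)$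 iff there is $(g,d,d')\in\mathcal{C}(\omega)$ with $(g_e,d_e,d'_e)\preceq_{\mathrm{cdi}}(g,d,d')$ for each $e\in\{0,1\}$. *)

From Stdlib Require Import Reals.
Open Scope R_scope.

Definition is_metric {X : Type} (d : X -> X -> R) : Prop :=
  (forall x y, 0 <= d x y) /\
  (forall x y, d x y = 0 <-> x = y) /\
  (forall x y, d x y = d y x) /\
  (forall x y z, d x z <= d x y + d y z).

Definition cauchy_seq {X : Type} (d : X -> X -> R) (u : nat -> X) : Prop :=
  forall eps, 0 < eps -> exists N : nat, forall m n : nat,
    (N <= m)%nat -> (N <= n)%nat -> d (u m) (u n) < eps.

Definition converges_to {X : Type} (d : X -> X -> R) (u : nat -> X) (x : X) : Prop :=
  forall eps, 0 < eps -> exists N : nat, forall n : nat, (N <= n)%nat -> d (u n) x < eps.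

Definition cauchy_continuous {X Y : Type} (dX : X -> X -> R) (dY : Y -> Y -> R)
  (f : X -> Y) : Prop :=
  forall u : nat -> X, cauchy_seq dX u -> cauchy_seq dY (fun n => f (u n)).

Definition metric_continuous {X Y : Type} (dX : X -> X -> R) (dY : Y -> Y -> R)
  (f : X -> Y) : Prop :=
  forall x eps, 0 < eps -> exists delta, 0 < delta /\
    forall y, dX x y < delta -> dY (f x) (f y) < eps.

Definition complete_metric {X : Type} (d : X -> X -> R) : Prop :=
  forall u : nat -> X, cauchy_seq d u -> exists x, converges_to d u x.

Definition dense_image {A X : Type} (d : X -> X -> R) (h : A -> X) : Prop :=
  forall x eps, 0 < eps -> exists a : A, d x (h a) < eps.

Definition separable_metric {X : Type} (d : X -> X -> R) : Prop :=
  exists s : nat -> X, dense_image d s.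

Definition polish_metric_space (X : Type) (d : X -> X -> R) : Prop :=
  is_metric d /\ complete_metric d /\ separable_metric d.

Definition infinite_type (X : Type) : Prop :=
  exists h : nat -> X, forall m n, h m = h n -> m = n.

Definition isometry {A B : Type} (dA : A -> A -> R) (dB : B -> B -> R) (i : A -> B) : Prop :=
  forall a b, dB (i a) (i b) = dA a b.

Definition dense_isometry {A B : Type} (dA : A -> A -> R) (dB : B -> B -> R) (i : A -> B) : Prop :=
  isometry dA dB i /\ dense_image dB i.

Definition in_C (g : nat -> nat) (d d' : nat -> nat -> R) : Prop :=
  is_metric d /\ is_metric d' /\ cauchy_continuous d d' g.

Definition codes (g : nat -> nat) (d d' : nat -> nat -> R)
  {X Y : Type} (dX : X -> X -> R) (dY : Y -> Y -> R) (f : X -> Y) : Prop :=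
  exists (iota : nat -> X) (iota' : nat -> Y),
    dense_isometry d dX iota /\ dense_isometry d' dY iota' /\
    forall n, iota' (g n) = f (iota n).

Definition preceq_cdi (g0 : nat -> nat) (d0 d0' : nat -> nat -> R)
  (g1 : nat -> nat) (d1 d1' : nat -> nat -> R) : Prop :=
  exists (iota iota' : nat -> nat),
    dense_isometry d0 d1 iota /\ dense_isometry d0' d1' iota' /\
    forall n, iota' (g0 n) = g1 (iota n).

Definition approx_cdi (g0 : nat -> nat) (d0 d0' : nat -> nat -> R)
  (g1 : nat -> nat) (d1 d1' : nat -> nat -> R) : Prop :=
  exists (g : nat -> nat) (d d' : nat -> nat -> R),
    in_C g d d' /\ preceq_cdi g0 d0 d0' g d d' /\ preceq_cdi g1 d1 d1' g d d'.

From Stdlib Require Import Reals Lra Lia List FinFun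
  ClassicalEpsilon FunctionalExtensionality PropExtensionality ProofIrrelevance.
Open Scope R_scope.

(* (2) => (1): the completions of <omega,d> and <omega,d'> are Polish, a Cauchy-continuous g
   extends continuously to them, and composing the dense isometries that witness the two
   instances of <=_cdi with the embeddings of omega shows that both triples code this extension.
   (1) => (2): list without repetition a countable subset of X containing the images of both
   codings, and a countable subset of Y containing the images of both codings and the image of
   the first list under f.  Pulling d_X and d_Y back along these lists gives metrics on omega in
   which f becomes a map g on omega, Cauchy-continuous because X is complete and f continuous. *)

Lemma inv_INR_S_small (eps : R) :
  0 < eps -> exists N, forall n, (N <= n)%nat -> / INR (S n) < eps.
Proof.
  intros Heps. destruct (archimed_cor1 eps Heps) as [N [HN HN0]].
  exists N. intros n Hn. eapply Rle_lt_trans; [|exact HN].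
  apply Rinv_le_contravar; [apply lt_0_INR; lia | apply le_INR; lia].
Qed.

Lemma inv_INR_S_pos (n : nat) : 0 < / INR (S n).
Proof. apply Rinv_0_lt_compat, lt_0_INR; lia. Qed.

Lemma Un_cv_const (c : R) : Un_cv (fun _ => c) c.
Proof.
  intros eps Heps. exists 0%nat. intros. unfold Rdist.
  rewrite Rminus_diag, Rabs_R0. exact Heps.
Qed.

Lemma Un_cv_le_eventually (a : nat -> R) (l c : R) :
  Un_cv a l -> (exists N, forall n, (N <= n)%nat -> a n <= c) -> l <= c.
Proof.
  intros Hcv [N HN]. destruct (Rle_or_lt l c) as [Hle | Hlt]; [exact Hle |].
  destruct (Hcv (l - c)) as [M HM]; [lra |].
  specialize (HM (max N M) (Nat.le_max_r _ _)).
  specialize (HN (max N M) (Nat.le_max_l _ _)).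
  unfold Rdist in HM. apply Rabs_def2 in HM. lra.
Qed.

Definition interleave {X : Type} (u v : nat -> X) (n : nat) : X :=
  if Nat.even n then u (Nat.div2 n) else v (Nat.div2 n).

Lemma interleave_even {X : Type} (u v : nat -> X) (n : nat) :
  interleave u v (2 * n) = u n.
Proof. unfold interleave. rewrite Nat.even_even, Nat.div2_double. reflexivity. Qed.

Lemma interleave_odd {X : Type} (u v : nat -> X) (n : nat) :
  interleave u v (2 * n + 1) = v n.
Proof. unfold interleave. rewrite Nat.even_odd, Nat.div2_odd'. reflexivity. Qed.

Lemma interleave_map {X Y : Type} (f : X -> Y) (u v : nat -> X) (n : nat) :
  f (interleave u v n) = interleave (fun k => f (u k)) (fun k => f (v k)) n.
Proof. unfold interleave. destruct (Nat.even n); reflexivity. Qed.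

Definition in_range {A X : Type} (e : A -> X) (x : X) : Prop := exists a, e a = x.

Lemma in_range_interleave {A X : Type} (e : A -> X) (u v : nat -> X) :
  (forall n, in_range e (interleave u v n)) ->
  (forall n, in_range e (u n)) /\ (forall n, in_range e (v n)).
Proof.
  intros He. split; intros n.
  - rewrite <- interleave_even with (v := v). apply He.
  - rewrite <- interleave_odd with (u := u). apply He.
Qed.

Section MetricSpace.

Context {X : Type} (d : X -> X -> R).
Hypothesis Hd : is_metric d.

Lemma dist_nonneg (x y : X) : 0 <= d x y.
Proof. apply Hd. Qed.

Lemma dist_sym (x y : X) : d x y = d y x.
Proof. apply Hd. Qed.

Lemma dist_triangle (x y z : X) : d x z <= d x y + d y z.
Proof. apply Hd. Qed.

Lemma dist_refl (x : X) : d x x = 0.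
Proof. apply Hd. reflexivity. Qed.

Lemma dist_eq0 (x y : X) : d x y = 0 -> x = y.
Proof. apply Hd. Qed.

Lemma converges_to_unique (u : nat -> X) (x y : X) :
  converges_to d u x -> converges_to d u y -> x = y.
Proof.
  intros Hx Hy. apply dist_eq0, Rle_antisym; [| apply dist_nonneg].
  apply Rle_plus_epsilon. intros eps Heps.
  destruct (Hx (eps / 2)) as [N1 H1]; [lra |].
  destruct (Hy (eps / 2)) as [N2 H2]; [lra |].
  pose (n := max N1 N2).
  assert (H1n := H1 n (Nat.le_max_l _ _)). assert (H2n := H2 n (Nat.le_max_r _ _)).
  assert (Htri := dist_triangle x (u n) y). rewrite (dist_sym x (u n)) in Htri. lra.
Qed.

Lemma converges_to_cauchy (u : nat -> X) (x : X) :
  converges_to d u x -> cauchy_seq d u.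
Proof.
  intros Hx eps Heps. destruct (Hx (eps / 2)) as [N HN]; [lra |].
  exists N. intros m n Hm Hn.
  assert (Htri := dist_triangle (u m) x (u n)). rewrite (dist_sym x (u n)) in Htri.
  assert (Hm' := HN m Hm). assert (Hn' := HN n Hn). lra.
Qed.

Lemma converges_to_interleave (u v : nat -> X) (x : X) :
  converges_to d u x -> converges_to d v x -> converges_to d (interleave u v) x.
Proof.
  intros Hu Hv eps Heps.
  destruct (Hu eps Heps) as [N1 H1]. destruct (Hv eps Heps) as [N2 H2].
  exists (2 * max N1 N2)%nat. intros n Hn.
  assert (Hhalf : (max N1 N2 <= Nat.div2 n)%nat) by (apply Nat.div2_le_lower_bound; lia).
  unfold interleave. destruct (Nat.even n); [apply H1 | apply H2]; lia.
Qed.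

Lemma converges_to_close (u v : nat -> X) (x : X) :
  converges_to d u x -> (forall n, d (v n) (u n) < / INR (S n)) ->
  converges_to d v x.
Proof.
  intros Hu Hclose eps Heps.
  destruct (inv_INR_S_small (eps / 2)) as [N1 H1]; [lra |].
  destruct (Hu (eps / 2)) as [N2 H2]; [lra |].
  exists (max N1 N2). intros n Hn.
  assert (Htri := dist_triangle (v n) (u n) x).
  assert (Hv := Hclose n). assert (H1n := H1 n ltac:(lia)). assert (H2n := H2 n ltac:(lia)).
  lra.
Qed.

End MetricSpace.

Lemma sequentially_continuous {X Y : Type} (dX : X -> X -> R) (dY : Y -> Y -> R)
  (f : X -> Y) : is_metric dX -> is_metric dY ->
  (forall u x, converges_to dX u x -> converges_to dY (fun n => f (u n)) (f x)) ->
  metric_continuous dX dY f.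
Proof.
  intros HX HY Hseq x eps Heps. apply NNPP. intros Hdisc.
  assert (Hbad : forall n, exists y, dX y x < / INR (S n) /\ eps <= dY (f y) (f x)).
  { intros n. apply NNPP. intros Hno. apply Hdisc.
    exists (/ INR (S n)). split; [apply inv_INR_S_pos |].
    intros y Hy. apply Rnot_le_lt. intros Hfy. apply Hno. exists y.
    rewrite (dist_sym dX HX), (dist_sym dY HY). auto. }
  destruct (choice _ Hbad) as [y Hy].
  assert (Hyx : converges_to dX y x).
  { apply (converges_to_close dX HX (fun _ => x)); [| apply Hy].
    intros e He. exists 0%nat. intros. rewrite (dist_refl dX HX). exact He. }
  destruct (Hseq y x Hyx eps Heps) as [N HN].
  assert (HfN := HN N (le_n N)). destruct (Hy N). lra.
Qed.

Lemma isometry_injective {A B : Type} (dA : A -> A -> R) (dB : B -> B -> R) (i : A -> B) :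
  is_metric dA -> isometry dA dB i -> Injective i.
Proof.
  intros HA Hi a b Hab. apply (dist_eq0 dA HA).
  rewrite <- Hi, Hab, Hi. apply (dist_refl dA HA).
Qed.

Lemma isometry_cauchy_seq {A B : Type} (dA : A -> A -> R) (dB : B -> B -> R) (i : A -> B)
  (u : nat -> A) :
  isometry dA dB i -> cauchy_seq dB (fun n => i (u n)) -> cauchy_seq dA u.
Proof.
  intros Hi Hu eps Heps. destruct (Hu eps Heps) as [N HN].
  exists N. intros m n Hm Hn. rewrite <- Hi. auto.
Qed.

Lemma dense_isometry_comp {A B C : Type} (dA : A -> A -> R) (dB : B -> B -> R)
  (dC : C -> C -> R) (i : A -> B) (j : B -> C) :
  is_metric dC -> dense_isometry dA dB i -> dense_isometry dB dC j ->
  dense_isometry dA dC (fun a => j (i a)).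
Proof.
  intros HC [Hi Hi_dense] [Hj Hj_dense]. split.
  - intros a b. rewrite Hj. apply Hi.
  - intros z eps Heps.
    destruct (Hj_dense z (eps / 2)) as [b Hb]; [lra |].
    destruct (Hi_dense b (eps / 2)) as [a Ha]; [lra |].
    exists a. assert (Htri := dist_triangle dC HC z (j b) (j (i a))). rewrite Hj in Htri. lra.
Qed.

Definition pullback {A X : Type} (dX : X -> X -> R) (e : A -> X) : A -> A -> R :=
  fun a b => dX (e a) (e b).

Lemma pullback_metric {A X : Type} (dX : X -> X -> R) (e : A -> X) :
  is_metric dX -> Injective e -> is_metric (pullback dX e).
Proof.
  intros HX He. unfold pullback. split; [| split; [| split]]; intros.
  - apply (dist_nonneg dX HX).
  - split; [intros Hab; apply He, (dist_eq0 dX HX), Hab | intros ->; apply (dist_refl dX HX)].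
  - apply (dist_sym dX HX).
  - apply (dist_triangle dX HX).
Qed.

Lemma infinite_type_fresh (X : Type) :
  infinite_type X -> forall l : list X, exists x, ~ In x l.
Proof.
  intros [k Hk] l. apply NNPP. intros Hall.
  assert (Hincl : incl (map k (seq 0 (S (length l)))) l).
  { intros x _. apply NNPP. intros Hx. apply Hall. eauto. }
  apply NoDup_incl_length in Hincl; [| apply Injective_map_NoDup, seq_NoDup; exact Hk].
  rewrite length_map, length_seq in Hincl. lia.
Qed.

Section InjectiveCovering.

Context {X : Type} (h : nat -> X).
Hypothesis fresh : forall l : list X, exists x, ~ In x l.

Let fresh_point (l : list X) : X :=
  proj1_sig (constructive_indefinite_description _ (fresh l)).

(* Step n keeps [h n] if it is new and otherwise spends a fresh point, so [h n]
   is listed after n + 1 steps and no point is listed twice. *)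
Let next (l : list X) (n : nat) : X :=
  if excluded_middle_informative (In (h n) l) then fresh_point l else h n.

Let next_notin (l : list X) (n : nat) : ~ In (next l n) l.
Proof.
  unfold next. destruct (excluded_middle_informative (In (h n) l)) as [_ | Hnew]; [| exact Hnew].
  exact (proj2_sig (constructive_indefinite_description _ (fresh l))).
Qed.

Fixpoint listed (n : nat) : list X :=
  match n with
  | O => nil
  | S m => listed m ++ next (listed m) m :: nil
  end.

Let enum (n : nat) : X := next (listed n) n.

Let In_listed (x : X) (n : nat) : In x (listed n) <-> exists m, (m < n)%nat /\ enum m = x.
Proof.
  induction n as [| n IH]; simpl.
  - split; [intros [] | intros [m [Hm _]]; lia].
  - rewrite in_app_iff, IH. simpl. split.
    + intros [[m [Hm Hx]] | [Hx | []]]; [exists m | exists n]; split; auto with arith.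
    + intros [m [Hm Hx]]. destruct (Nat.eq_dec m n) as [-> | Hmn]; [auto |].
      left. exists m. split; [lia | exact Hx].
Qed.

Let h_listed (n : nat) : In (h n) (listed (S n)).
Proof.
  simpl. apply in_or_app. unfold next.
  destruct (excluded_middle_informative (In (h n) (listed n))); simpl; auto.
Qed.

Lemma injective_covering : exists e : nat -> X, Injective e /\ forall n, in_range e (h n).
Proof.
  exists enum. split.
  - assert (Hlt : forall a b, (a < b)%nat -> enum a <> enum b).
    { intros a b Hab Heq. apply (next_notin (listed b) b).
      apply In_listed. exists a. auto. }
    intros a b Heq. destruct (Nat.lt_total a b) as [Hab | [Hab | Hab]]; auto.
    + destruct (Hlt a b Hab Heq).
    + destruct (Hlt b a Hab (eq_sym Heq)).
  - intros n. destruct (proj1 (In_listed (h n) (S n)) (h_listed n)) as [m [_ Hm]].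
    exists m. exact Hm.
Qed.

End InjectiveCovering.

Lemma pullback_cauchy_continuous {X Y : Type} (dX : X -> X -> R) (dY : Y -> Y -> R)
  (f : X -> Y) (e : nat -> X) (e' : nat -> Y) (g : nat -> nat) :
  is_metric dX -> is_metric dY -> complete_metric dX -> metric_continuous dX dY f ->
  (forall n, e' (g n) = f (e n)) -> cauchy_continuous (pullback dX e) (pullback dY e') g.
Proof.
  intros HX HY HXc Hf Hg u Hu eps Heps.
  destruct (HXc (fun n => e (u n)) Hu) as [x Hx].
  destruct (Hf x (eps / 2)) as [delta [Hdelta Hfx]]; [lra |].
  destruct (Hx delta Hdelta) as [N HN].
  assert (Hnear : forall n, (N <= n)%nat -> dY (f x) (e' (g (u n))) < eps / 2).
  { intros n Hn. rewrite Hg. apply Hfx. rewrite (dist_sym dX HX). auto. }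
  exists N. intros m n Hm Hn. unfold pullback.
  assert (Htri := dist_triangle dY HY (e' (g (u m))) (f x) (e' (g (u n)))).
  rewrite (dist_sym dY HY _ (f x)) in Htri.
  assert (Hm' := Hnear m Hm). assert (Hn' := Hnear n Hn). lra.
Qed.

Lemma dense_isometry_pullback {X : Type} (d0 : nat -> nat -> R) (dX : X -> X -> R)
  (i : nat -> X) (e : nat -> X) (j : nat -> nat) :
  dense_isometry d0 dX i -> (forall n, e (j n) = i n) -> dense_isometry d0 (pullback dX e) j.
Proof.
  intros [Hi Hi_dense] Hj. unfold pullback. split.
  - intros a b. rewrite !Hj. apply Hi.
  - intros m eps Heps. destruct (Hi_dense (e m) eps Heps) as [n Hn].
    exists n. rewrite Hj. exact Hn.
Qed.

Lemma preceq_cdi_pullback {X Y : Type} (dX : X -> X -> R) (dY : Y -> Y -> R)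
  (f : X -> Y) (g0 : nat -> nat) (d0 d0' : nat -> nat -> R) (i : nat -> X) (i' : nat -> Y)
  (e : nat -> X) (e' : nat -> Y) (g : nat -> nat) :
  dense_isometry d0 dX i -> dense_isometry d0' dY i' -> (forall n, i' (g0 n) = f (i n)) ->
  (forall n, in_range e (i n)) -> (forall n, in_range e' (i' n)) -> Injective e' ->
  (forall n, e' (g n) = f (e n)) -> preceq_cdi g0 d0 d0' g (pullback dX e) (pullback dY e').
Proof.
  intros Hi Hi' Hcomm He He' He'_inj Hg.
  destruct (choice _ He) as [j Hj]. destruct (choice _ He') as [j' Hj'].
  exists j, j'. split; [| split].
  - exact (dense_isometry_pullback d0 dX i e j Hi Hj).
  - exact (dense_isometry_pullback d0' dY i' e' j' Hi' Hj').
  - intros n. apply He'_inj. rewrite Hj', Hg, Hj. apply Hcomm.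
Qed.

Lemma approx_cdi_of_common_coding {X Y : Type} (dX : X -> X -> R) (dY : Y -> Y -> R)
  (f : X -> Y) (g0 : nat -> nat) (d0 d0' : nat -> nat -> R)
  (g1 : nat -> nat) (d1 d1' : nat -> nat -> R) :
  is_metric dX -> complete_metric dX -> infinite_type X ->
  is_metric dY -> infinite_type Y -> metric_continuous dX dY f ->
  codes g0 d0 d0' dX dY f -> codes g1 d1 d1' dX dY f ->
  approx_cdi g0 d0 d0' g1 d1 d1'.
Proof.
  intros HX HXc HXinf HY HYinf Hf [i0 [i0' [Hi0 [Hi0' Hc0]]]] [i1 [i1' [Hi1 [Hi1' Hc1]]]].
  destruct (injective_covering (interleave i0 i1) (infinite_type_fresh X HXinf))
    as [e [He_inj He]].
  destruct (in_range_interleave e i0 i1 He) as [He0 He1].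
  destruct (injective_covering (interleave (interleave i0' i1') (fun n => f (e n)))
    (infinite_type_fresh Y HYinf)) as [e' [He'_inj He']].
  destruct (in_range_interleave _ _ _ He') as [He'01 Hfe].
  destruct (in_range_interleave _ _ _ He'01) as [He'0 He'1].
  destruct (choice _ Hfe) as [g Hg].
  exists g, (pullback dX e), (pullback dY e'). split; [split; [| split] | split].
  - apply pullback_metric; assumption.
  - apply pullback_metric; assumption.
  - apply (pullback_cauchy_continuous dX dY f); assumption.
  - apply (preceq_cdi_pullback dX dY f g0 d0 d0' i0 i0'); assumption.
  - apply (preceq_cdi_pullback dX dY f g1 d1 d1' i1 i1'); assumption.
Qed.

Section Completion.

Context (d : nat -> nat -> R).
Hypothesis Hd : is_metric d.

Lemma cauchy_const (a : nat) : cauchy_seq d (fun _ => a).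
Proof. intros eps Heps. exists 0%nat. intros. rewrite (dist_refl d Hd). exact Heps. Qed.

Lemma dist_Cauchy_crit (u v : nat -> nat) :
  cauchy_seq d u -> cauchy_seq d v -> Cauchy_crit (fun n => d (u n) (v n)).
Proof.
  intros Hu Hv eps Heps.
  destruct (Hu (eps / 2)) as [N1 H1]; [lra |].
  destruct (Hv (eps / 2)) as [N2 H2]; [lra |].
  exists (max N1 N2). intros n m Hn Hm. unfold Rdist.
  (* |d(u n, v n) - d(u m, v m)| <= d(u n, u m) + d(v n, v m) *)
  assert (Hun := H1 n m ltac:(lia) ltac:(lia)).
  assert (Hvn := H2 n m ltac:(lia) ltac:(lia)).
  assert (T1 := dist_triangle d Hd (u n) (u m) (v n)).
  assert (T2 := dist_triangle d Hd (u m) (v m) (v n)).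
  assert (T3 := dist_triangle d Hd (u m) (u n) (v m)).
  assert (T4 := dist_triangle d Hd (u n) (v n) (v m)).
  rewrite (dist_sym d Hd (v m) (v n)) in T2. rewrite (dist_sym d Hd (u m) (u n)) in T3.
  apply Rabs_def1; lra.
Qed.

Definition seq_dist (u v : nat -> nat) : R :=
  epsilon (inhabits 0) (Un_cv (fun n => d (u n) (v n))).

Lemma seq_dist_cv (u v : nat -> nat) : cauchy_seq d u -> cauchy_seq d v ->
  Un_cv (fun n => d (u n) (v n)) (seq_dist u v).
Proof.
  intros Hu Hv. unfold seq_dist. apply epsilon_spec.
  destruct (R_complete _ (dist_Cauchy_crit u v Hu Hv)) as [l Hl]. eauto.
Qed.

Lemma seq_dist_unique (u v : nat -> nat) (l : R) : cauchy_seq d u -> cauchy_seq d v ->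
  Un_cv (fun n => d (u n) (v n)) l -> seq_dist u v = l.
Proof. intros Hu Hv. apply UL_sequence, seq_dist_cv; assumption. Qed.

Lemma seq_dist_nonneg (u v : nat -> nat) : cauchy_seq d u -> cauchy_seq d v ->
  0 <= seq_dist u v.
Proof.
  intros Hu Hv. eapply (Rle_cv_lim (Un := fun _ => 0));
    [| apply Un_cv_const | apply seq_dist_cv; auto].
  intros n. apply (dist_nonneg d Hd).
Qed.

Lemma seq_dist_sym (u v : nat -> nat) : cauchy_seq d u -> cauchy_seq d v ->
  seq_dist u v = seq_dist v u.
Proof.
  intros Hu Hv. apply seq_dist_unique; auto.
  apply (Un_cv_ext (fun n => d (v n) (u n))); [intros n; apply (dist_sym d Hd) |].
  apply seq_dist_cv; auto.
Qed.

Lemma seq_dist_triangle (u v w : nat -> nat) :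
  cauchy_seq d u -> cauchy_seq d v -> cauchy_seq d w ->
  seq_dist u w <= seq_dist u v + seq_dist v w.
Proof.
  intros Hu Hv Hw. eapply Rle_cv_lim;
    [| apply seq_dist_cv; auto | apply CV_plus; apply seq_dist_cv; auto].
  intros n. apply (dist_triangle d Hd).
Qed.

Lemma seq_dist_refl (u : nat -> nat) : cauchy_seq d u -> seq_dist u u = 0.
Proof.
  intros Hu. apply seq_dist_unique; auto.
  apply (Un_cv_ext (fun _ => 0)); [intros n; symmetry; apply (dist_refl d Hd) | apply Un_cv_const].
Qed.

Lemma seq_dist_const (a b : nat) : seq_dist (fun _ => a) (fun _ => b) = d a b.
Proof. apply seq_dist_unique; [apply cauchy_const .. | apply Un_cv_const]. Qed.

Lemma seq_dist_congr (u u' v v' : nat -> nat) :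
  cauchy_seq d u -> cauchy_seq d u' -> cauchy_seq d v -> cauchy_seq d v' ->
  seq_dist u u' = 0 -> seq_dist v v' = 0 -> seq_dist u v = seq_dist u' v'.
Proof.
  intros Hu Hu' Hv Hv' Huu' Hvv'.
  assert (T1 := seq_dist_triangle u u' v Hu Hu' Hv).
  assert (T2 := seq_dist_triangle u' v' v Hu' Hv' Hv).
  assert (T3 := seq_dist_triangle u' u v' Hu' Hu Hv').
  assert (T4 := seq_dist_triangle u v v' Hu Hv Hv').
  rewrite (seq_dist_sym v' v) in T2 by assumption.
  rewrite (seq_dist_sym u' u) in T3 by assumption.
  lra.
Qed.

(* A point of the completion is a Cauchy sequence that is the [epsilon]-chosen
   representative of its own class; since [epsilon] only sees the class,
   equivalent sequences have the same representative. *)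
Definition canon (u : nat -> nat) : nat -> nat :=
  epsilon (inhabits (fun _ => 0%nat)) (fun v => cauchy_seq d v /\ seq_dist u v = 0).

Lemma canon_spec (u : nat -> nat) : cauchy_seq d u ->
  cauchy_seq d (canon u) /\ seq_dist u (canon u) = 0.
Proof.
  intros Hu. unfold canon. apply epsilon_spec.
  exists u. split; [exact Hu | apply seq_dist_refl, Hu].
Qed.

Lemma canon_eq (u v : nat -> nat) : cauchy_seq d u -> cauchy_seq d v ->
  seq_dist u v = 0 -> canon u = canon v.
Proof.
  intros Hu Hv Huv. unfold canon. f_equal.
  apply functional_extensionality. intros w. apply propositional_extensionality.
  split; intros [Hw Hzero]; split; try exact Hw.
  - assert (T := seq_dist_triangle v u w Hv Hu Hw).
    rewrite seq_dist_sym in Huv by assumption.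
    assert (P := seq_dist_nonneg v w Hv Hw). lra.
  - assert (T := seq_dist_triangle u v w Hu Hv Hw).
    assert (P := seq_dist_nonneg u w Hu Hw). lra.
Qed.

Lemma canon_in_completion (u : nat -> nat) : cauchy_seq d u ->
  cauchy_seq d (canon u) /\ canon (canon u) = canon u.
Proof.
  intros Hu. destruct (canon_spec u Hu) as [Hcu Hzero]. split; [exact Hcu |].
  symmetry. apply canon_eq; assumption.
Qed.

Definition completion : Type := {u : nat -> nat | cauchy_seq d u /\ canon u = u}.

Definition completion_dist (x y : completion) : R := seq_dist (proj1_sig x) (proj1_sig y).

Definition class (u : nat -> nat) (Hu : cauchy_seq d u) : completion :=
  exist _ (canon u) (canon_in_completion u Hu).

Lemma completion_cauchy (x : completion) : cauchy_seq d (proj1_sig x).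
Proof. exact (proj1 (proj2_sig x)). Qed.

Lemma class_eq (u v : nat -> nat) (Hu : cauchy_seq d u) (Hv : cauchy_seq d v) :
  seq_dist u v = 0 -> class u Hu = class v Hv.
Proof. intros Huv. apply subset_eq_compat, canon_eq; assumption. Qed.

Lemma class_val (x : completion) (Hx : cauchy_seq d (proj1_sig x)) : class (proj1_sig x) Hx = x.
Proof. destruct x as [u [Hu Hcu]]. apply subset_eq_compat. exact Hcu. Qed.

Lemma completion_dist_class (u v : nat -> nat) (Hu : cauchy_seq d u) (Hv : cauchy_seq d v) :
  completion_dist (class u Hu) (class v Hv) = seq_dist u v.
Proof.
  destruct (canon_spec u Hu) as [Hcu Hu0]. destruct (canon_spec v Hv) as [Hcv Hv0].
  apply seq_dist_congr; try assumption; rewrite seq_dist_sym; assumption.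
Qed.

Lemma completion_metric : is_metric completion_dist.
Proof.
  unfold completion_dist. split; [| split; [| split]].
  - intros x y. apply seq_dist_nonneg; apply completion_cauchy.
  - intros [u [Hu Hcu]] [v [Hv Hcv]]. simpl. split.
    + intros Huv. apply subset_eq_compat. rewrite <- Hcu, <- Hcv. apply canon_eq; assumption.
    + intros Hxy. inversion Hxy. apply seq_dist_refl, Hv.
  - intros x y. apply seq_dist_sym; apply completion_cauchy.
  - intros x y z. apply seq_dist_triangle; apply completion_cauchy.
Qed.

Definition embed (a : nat) : completion := class (fun _ => a) (cauchy_const a).

Lemma embed_isometry : isometry d completion_dist embed.
Proof. intros a b. unfold embed. rewrite completion_dist_class. apply seq_dist_const. Qed.

Lemma embed_converges (u : nat -> nat) (Hu : cauchy_seq d u) :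
  converges_to completion_dist (fun k => embed (u k)) (class u Hu).
Proof.
  intros eps Heps. destruct (Hu (eps / 2)) as [N HN]; [lra |].
  exists N. intros k Hk. unfold embed. rewrite completion_dist_class.
  enough (seq_dist (fun _ => u k) u <= eps / 2) by lra.
  apply (Un_cv_le_eventually (fun n => d (u k) (u n)));
    [apply seq_dist_cv; auto using cauchy_const |].
  exists N. intros n Hn. left. auto.
Qed.

Lemma embed_dense : dense_image completion_dist embed.
Proof.
  intros x eps Heps. rewrite <- (class_val x (completion_cauchy x)).
  destruct (embed_converges _ (completion_cauchy x) eps Heps) as [N HN].
  exists (proj1_sig x N). rewrite (dist_sym _ completion_metric). apply HN, le_n.
Qed.

Lemma embed_converges_class (w : nat -> nat) (x : completion) :
  converges_to completion_dist (fun k => embed (w k)) x ->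
  exists Hw : cauchy_seq d w, x = class w Hw.
Proof.
  intros Hx.
  assert (Hw : cauchy_seq d w).
  { apply (isometry_cauchy_seq d completion_dist embed w embed_isometry).
    exact (converges_to_cauchy _ completion_metric _ _ Hx). }
  exists Hw. exact (converges_to_unique _ completion_metric _ _ _ Hx (embed_converges w Hw)).
Qed.

Lemma completion_complete : complete_metric completion_dist.
Proof.
  intros xs Hxs.
  assert (Happrox : forall k, exists a, completion_dist (embed a) (xs k) < / INR (S k)).
  { intros k. destruct (embed_dense (xs k) _ (inv_INR_S_pos k)) as [a Ha].
    exists a. rewrite (dist_sym _ completion_metric). exact Ha. }
  destruct (choice _ Happrox) as [w Hw].
  assert (Hwc : cauchy_seq completion_dist (fun k => embed (w k))).
  { intros eps Heps.
    destruct (inv_INR_S_small (eps / 3)) as [N0 HN0]; [lra |].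
    destruct (Hxs (eps / 3)) as [N1 HN1]; [lra |].
    exists (max N0 N1). intros m n Hm Hn.
    assert (T1 := dist_triangle _ completion_metric (embed (w m)) (xs m) (embed (w n))).
    assert (T2 := dist_triangle _ completion_metric (xs m) (xs n) (embed (w n))).
    rewrite (dist_sym _ completion_metric (xs n)) in T2.
    assert (Hwm := Hw m). assert (Hwn := Hw n).
    assert (Hm0 := HN0 m ltac:(lia)). assert (Hn0 := HN0 n ltac:(lia)).
    assert (Hmn := HN1 m n ltac:(lia) ltac:(lia)). lra. }
  assert (Hwd := isometry_cauchy_seq d completion_dist embed w embed_isometry Hwc).
  exists (class w Hwd).
  apply (converges_to_close _ completion_metric (fun k => embed (w k))); [apply embed_converges |].
  intros n. rewrite (dist_sym _ completion_metric). apply Hw.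
Qed.

Lemma completion_polish : polish_metric_space completion completion_dist.
Proof.
  split; [exact completion_metric | split; [exact completion_complete |]].
  exists embed. exact embed_dense.
Qed.

Lemma completion_infinite : infinite_type completion.
Proof. exists embed. exact (isometry_injective d completion_dist embed Hd embed_isometry). Qed.

End Completion.

Section Extension.

Context (d d' : nat -> nat -> R) (g : nat -> nat).
Hypotheses (Hd : is_metric d) (Hd' : is_metric d') (Hg : cauchy_continuous d d' g).

(* Interleaving two equivalent Cauchy sequences gives a Cauchy sequence, since
   both embedded halves converge to the same point; [g] maps it to a Cauchy sequence. *)
Lemma cauchy_continuous_seq_dist (u v : nat -> nat) (Hu : cauchy_seq d u) (Hv : cauchy_seq d v) :
  seq_dist d u v = 0 -> seq_dist d' (fun n => g (u n)) (fun n => g (v n)) = 0.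
Proof.
  intros Huv.
  assert (Hconv : converges_to (completion_dist d) (fun k => embed d Hd (interleave u v k))
                    (class d Hd u Hu)).
  { replace (fun k => embed d Hd (interleave u v k))
      with (interleave (fun k => embed d Hd (u k)) (fun k => embed d Hd (v k)))
      by (apply functional_extensionality; intros k; symmetry; apply interleave_map).
    apply converges_to_interleave; [apply embed_converges |].
    rewrite (class_eq d Hd u v Hu Hv Huv). apply embed_converges. }
  destruct (embed_converges_class d Hd _ _ Hconv) as [Hw _].
  apply Rle_antisym; [| apply (seq_dist_nonneg d' Hd'); apply Hg; assumption].
  apply Rle_plus_epsilon. intros eps Heps. rewrite Rplus_0_l.
  apply (Un_cv_le_eventually (fun n => d' (g (u n)) (g (v n)))).
  { apply (seq_dist_cv d' Hd'); apply Hg; assumption. }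
  destruct (Hg _ Hw eps Heps) as [N HN]. exists N. intros n Hn. left.
  rewrite <- (interleave_even u v n), <- (interleave_odd u v n). apply HN; lia.
Qed.

Definition extension (x : completion d) : completion d' :=
  class d' Hd' (fun n => g (proj1_sig x n)) (Hg _ (completion_cauchy d x)).

Lemma extension_class (u : nat -> nat) (Hu : cauchy_seq d u) :
  extension (class d Hd u Hu) = class d' Hd' (fun n => g (u n)) (Hg u Hu).
Proof.
  destruct (canon_spec d Hd u Hu) as [Hcu Hu0].
  apply class_eq, cauchy_continuous_seq_dist; try assumption.
  rewrite (seq_dist_sym d Hd); assumption.
Qed.

Lemma extension_embed (a : nat) : extension (embed d Hd a) = embed d' Hd' (g a).
Proof.
  unfold embed at 1. rewrite extension_class. apply class_eq.
  apply (seq_dist_refl d' Hd'), cauchy_const, Hd'.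
Qed.

Lemma extension_converges (w : nat -> nat) (x : completion d) :
  converges_to (completion_dist d) (fun k => embed d Hd (w k)) x ->
  converges_to (completion_dist d') (fun k => embed d' Hd' (g (w k))) (extension x).
Proof.
  intros Hx. destruct (embed_converges_class d Hd w x Hx) as [Hw ->].
  rewrite extension_class. apply embed_converges.
Qed.

Lemma extension_approx (x : completion d) (delta : R) : 0 < delta ->
  exists a, completion_dist d (embed d Hd a) x < delta /\
            completion_dist d' (embed d' Hd' (g a)) (extension x) < delta.
Proof.
  intros Hdelta. rewrite <- (class_val d Hd x (completion_cauchy d x)).
  set (u := proj1_sig x). rewrite extension_class.
  destruct (embed_converges d Hd u (completion_cauchy d x) delta Hdelta) as [N1 HN1].
  destruct (embed_converges d' Hd' _ (Hg u (completion_cauchy d x)) delta Hdelta) as [N2 HN2].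
  exists (u (max N1 N2)). split; [apply HN1 | apply HN2]; lia.
Qed.

Lemma extension_continuous : metric_continuous (completion_dist d) (completion_dist d') extension.
Proof.
  apply sequentially_continuous; [apply completion_metric; assumption .. |].
  intros y x Hyx.
  destruct (choice _ (fun k => extension_approx (y k) _ (inv_INR_S_pos k))) as [a Ha].
  assert (Hax : converges_to (completion_dist d) (fun k => embed d Hd (a k)) x).
  { apply (converges_to_close _ (completion_metric d Hd) y); [exact Hyx | apply Ha]. }
  apply (converges_to_close _ (completion_metric d' Hd') _ _ _ (extension_converges a x Hax)).
  intros n. rewrite (dist_sym _ (completion_metric d' Hd')). apply Ha.
Qed.

Lemma preceq_cdi_codes_extension (g0 : nat -> nat) (d0 d0' : nat -> nat -> R) :
  preceq_cdi g0 d0 d0' g d d' -> codes g0 d0 d0' (completion_dist d) (completion_dist d') extension.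
Proof.
  intros [j [j' [Hj [Hj' Hcomm]]]].
  exists (fun n => embed d Hd (j n)), (fun n => embed d' Hd' (j' n)). split; [| split].
  - apply (dense_isometry_comp d0 d); [apply completion_metric; assumption | exact Hj |].
    split; [apply embed_isometry | apply embed_dense].
  - apply (dense_isometry_comp d0' d'); [apply completion_metric; assumption | exact Hj' |].
    split; [apply embed_isometry | apply embed_dense].
  - intros n. rewrite Hcomm. symmetry. apply extension_embed.
Qed.

End Extension.

Theorem lemma4p5 (g0 : nat -> nat) (d0 d0' : nat -> nat -> R)
  (g1 : nat -> nat) (d1 d1' : nat -> nat -> R) :
  in_C g0 d0 d0' -> in_C g1 d1 d1' ->
  ((exists (X Y : Type) (dX : X -> X -> R) (dY : Y -> Y -> R) (f : X -> Y),
      polish_metric_space X dX /\ infinite_type X /\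
      polish_metric_space Y dY /\ infinite_type Y /\
      metric_continuous dX dY f /\
      codes g0 d0 d0' dX dY f /\ codes g1 d1 d1' dX dY f)
   <-> approx_cdi g0 d0 d0' g1 d1 d1').
Proof.
  (* Neither direction uses that the two given triples lie in C(omega). *)
  intros _ _. split.
  - intros (X & Y & dX & dY & f & [HX [HXc _]] & HXinf & [HY _] & HYinf & Hf & Hc0 & Hc1).
    exact (approx_cdi_of_common_coding dX dY f g0 d0 d0' g1 d1 d1'
             HX HXc HXinf HY HYinf Hf Hc0 Hc1).
  - intros (g & d & d' & [Hd [Hd' Hg]] & H0 & H1).
    exists (completion d), (completion d'), (completion_dist d), (completion_dist d'),
      (extension d d' g Hd' Hg).
    refine (conj (completion_polish d Hd) (conj (completion_infinite d Hd)
      (conj (completion_polish d' Hd') (conj (completion_infinite d' Hd')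
      (conj (extension_continuous d d' g Hd Hd' Hg) (conj _ _)))))).
    + exact (preceq_cdi_codes_extension d d' g Hd Hd' Hg g0 d0 d0' H0).
    + exact (preceq_cdi_codes_extension d d' g Hd Hd' Hg g1 d1 d1' H1).
Qed.
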